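(* Let $A\subset\mathbb S$, $\epsilon>0$, $a\in A$, and let $x\in\mathbb{R}^n$ be $\epsilon$-trapped by $a$. Then the orbit $\{T^ix\}$ does not converge to $A$.
   Context: Work in $X=\mathbb{R}^n$ with Euclidean distance $d$ and norm $\|\cdot\|$, unit sphere $\mathbb S$. An inversion is a map $\iota=B\circ\iota_0$ where $\iota_0(x)=x/\|x\|^2$ and $B$ is an isometry fixing $0$. Let $\mathcal Z$ be a discrete group of isometries of $X$ and fix a sequence $\gamma_1,\gamma_2,\dots$ in $\mathcal Z$; set $T^0=\mathrm{id}$ and $T^ix=\gamma_i^{-1}\iota\gamma_{i-1}^{-1}\iota\cdots\gamma_1^{-1}\iota x$. For $A\subset\mathbb S$ and $r>0$, $N_r(A)$ is the open $r$-neighborhood of $A$. For $x$ with $\|T^ix\|<1$ for all $i\ge0$: $x$ $\epsilon$-orbits $A$ if $T^ix\in N_\epsilon(A)$ for all $i\ge0$; $x$ eventually $\epsilon$-orbits $A$ if this holds for all sufficiently large $i$; $x$ (equivalently its orbit) converges to $A$ if it eventually $\epsilon$-orbits $A$ for every $\epsilon>0$. For $a\in A$, the Voronoi cell is $V(a,A)=\{x:d(x,a)\le d(x,b)\text{ for all }b\in A\setminus\{a\}\}$ and $V_r(a,A)=N_r(a)\cap V(a,A)$. A point $a\in A$ is an $\epsilon$-trap (relative to $A$) if (i) $T^ia\in A$ for all $i>0$, and (ii) every $x$ that $\epsilon$-orbits $A$ and lies in $V_\epsilon(a,A)$ satisfies $T^ix\in V_\epsilon(T^ia,A)$ for all $i\ge0$.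 A point $x$ is $\epsilon$-trapped by $a$ if $a$ is an $\epsilon$-trap, $x$ $\epsilon$-orbits $A$, and $x\in V_\epsilon(a,A)$. *)

From mathcomp Require Import all_boot all_order all_algebra.
From mathcomp Require Import reals.
From Stdlib Require List.
Set Implicit Arguments.
Unset Strict Implicit.
Unset Printing Implicit Defensive.
Import Order.TTheory GRing.Theory Num.Theory.
Local Open Scope ring_scope.

Section Defs.
Variables (R : realType) (n : nat).

Notation vec := 'rV[R]_n.

Definition enorm (x : vec) : R := Num.sqrt (\sum_(i < n) (x ord0 i) ^+ 2).
Definition edist (x y : vec) : R := enorm (x - y).

Definition on_sphere (x : vec) : Prop := enorm x = 1.

Definition is_isometry (f : vec -> vec) : Prop :=
  forall x y, edist (f x) (f y) = edist x y.

Definition isometry_group (Z : (vec -> vec) -> Prop) : Prop :=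
  [/\ forall g, Z g -> is_isometry g,
      Z id,
      forall g h, Z g -> Z h -> Z (g \o h)
    & forall g, Z g -> exists2 h, Z h & cancel g h /\ cancel h g].

(* discreteness of a group of isometries of R^n (equivalently, proper
   discontinuity): only finitely many elements move 0 into any ball *)
Definition discrete_group (Z : (vec -> vec) -> Prop) : Prop :=
  forall r : R, exists s : seq (vec -> vec),
    forall g, Z g -> edist (g 0) 0 <= r -> List.In g s.

Definition iota0 (x : vec) : vec := (enorm x ^+ 2)^-1 *: x.
Definition inversion (B : vec -> vec) (x : vec) : vec := B (iota0 x).

(* T^i, where ginv i = gamma_i^{-1} *)
Fixpoint Tit (B : vec -> vec) (ginv : nat -> vec -> vec) (i : nat) (x : vec)
  : vec :=
  match i with
  | 0 => x
  | i'.+1 => ginv i'.+1 (inversion B (Tit B ginv i' x))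
  end.

Definition nbhd (r : R) (A : vec -> Prop) (x : vec) : Prop :=
  exists2 b, A b & edist x b < r.

(* the orbit of x is defined and stays in the open unit ball
   (the inversion being defined off 0, we require T^i x <> 0) *)
Definition orbit_in_ball B ginv (x : vec) : Prop :=
  forall i, 0 < enorm (Tit B ginv i x) < 1.

Definition eps_orbits B ginv (A : vec -> Prop) (eps : R) (x : vec) : Prop :=
  orbit_in_ball B ginv x /\ forall i, nbhd eps A (Tit B ginv i x).

Definition eventually_eps_orbits B ginv (A : vec -> Prop) (eps : R) (x : vec)
  : Prop :=
  orbit_in_ball B ginv x /\
  exists N, forall i, (N <= i)%N -> nbhd eps A (Tit B ginv i x).

Definition converges_to B ginv (A : vec -> Prop) (x : vec) : Prop :=
  orbit_in_ball B ginv x /\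
  forall eps : R, 0 < eps -> eventually_eps_orbits B ginv A eps x.

Definition voronoi (a : vec) (A : vec -> Prop) (x : vec) : Prop :=
  forall b, A b -> b <> a -> edist x a <= edist x b.

Definition voronoi_r (r : R) (a : vec) (A : vec -> Prop) (x : vec) : Prop :=
  edist x a < r /\ voronoi a A x.

Definition eps_trap B ginv (A : vec -> Prop) (eps : R) (a : vec) : Prop :=
  A a /\
  (forall i, (0 < i)%N -> A (Tit B ginv i a)) /\
  (forall x, eps_orbits B ginv A eps x -> voronoi_r eps a A x ->
     forall i, voronoi_r eps (Tit B ginv i a) A (Tit B ginv i x)).

Definition eps_trapped_by B ginv (A : vec -> Prop) (eps : R) (a x : vec)
  : Prop :=
  eps_trap B ginv A eps a /\ eps_orbits B ginv A eps x /\
  voronoi_r eps a A x.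

End Defs.

From mathcomp Require Import all_boot all_order all_algebra.
From mathcomp Require Import reals.
From mathcomp Require Import ring.
Import Order.TTheory GRing.Theory Num.Theory.
Local Open Scope ring_scope.

(* The inversion iota0 fixes the unit sphere pointwise and, for a point a on
   the sphere and 0 < |x| <= 1, multiplies |x - a|^2 by 1/|x|^2 >= 1.
   As the gamma_i^-1 and B are isometries and T^i a stays on the sphere, the
   distance d(T^i x, T^i a) is nondecreasing in i.  Being trapped, T^i x lies in
   the Voronoi cell of T^i a, so d(T^i x, A) = d(T^i x, T^i a) >= d(x, a) > 0 for
   every i, and the orbit never enters the d(x, a)-neighbourhood of A. *)

Section EuclideanGeometry.
Context {R : realType} {n : nat}.
Notation vec := 'rV[R]_n.

Lemma sqr_enorm (x : vec) : enorm x ^+ 2 = \sum_(i < n) (x ord0 i) ^+ 2.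
Proof. by rewrite /enorm sqr_sqrtr // sumr_ge0 // => i _; rewrite sqr_ge0. Qed.

Lemma sqr_edist (x y : vec) : edist x y ^+ 2 = \sum_(i < n) ((x - y) ord0 i) ^+ 2.
Proof. exact: sqr_enorm. Qed.

Lemma edist_ge0 (x y : vec) : 0 <= edist x y.
Proof. exact: sqrtr_ge0. Qed.

Lemma edist_eq0 (x y : vec) : edist x y = 0 -> x = y.
Proof.
move=> xy0; have /eqP := sqr_edist x y; rewrite xy0 expr0n /= eq_sym.
rewrite psumr_eq0 => [/allP xy_eq|i _]; last exact: sqr_ge0.
apply/rowP => i; apply/eqP.
by have := xy_eq i (mem_index_enum i); rewrite /= sqrf_eq0 !mxE subr_eq0.
Qed.

Lemma edist_gt0 (x y : vec) : x <> y -> 0 < edist x y.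
Proof. by move=> xy; rewrite lt_def edist_ge0 andbT; apply/eqP => /edist_eq0. Qed.

Lemma iota0_sphere {a : vec} : on_sphere a -> iota0 a = a.
Proof. by rewrite /iota0 => ->; rewrite expr1n invr1 scale1r. Qed.

Lemma sqr_edist_iota0 (x a : vec) : enorm x != 0 -> on_sphere a ->
  edist (iota0 x) a ^+ 2 = (enorm x ^+ 2)^-1 * edist x a ^+ 2.
Proof.
move=> enorm_x0 a1; set c := (enorm x ^+ 2)^-1.
have cx : c * \sum_(i < n) (x ord0 i) ^+ 2 = 1 by rewrite -sqr_enorm mulVf ?expf_neq0.
have a_sum : \sum_(i < n) (a ord0 i) ^+ 2 = 1 by rewrite -sqr_enorm a1 expr1n.
apply/eqP; rewrite !sqr_edist -subr_eq0 mulr_sumr -sumrB.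
rewrite (eq_bigr (fun i => (c ^+ 2 - c) * (x ord0 i) ^+ 2 + (1 - c) * (a ord0 i) ^+ 2));
  last by move=> i _; rewrite /iota0 !mxE -/c; ring.
rewrite big_split /= -!mulr_sumr a_sum mulrBl expr2 -mulrA cx.
by apply/eqP; ring.
Qed.

Lemma edist_iota0_ge (x a : vec) : 0 < enorm x <= 1 -> on_sphere a ->
  edist x a <= edist (iota0 x) a.
Proof.
move=> /andP[x_gt0 x_le1] a1.
rewrite -(ler_pXn2r (ltn0Sn 1)) ?nnegrE ?edist_ge0 // sqr_edist_iota0 ?gt_eqF //.
rewrite ler_peMl ?exprn_ge0 ?edist_ge0 // invr_ge1 ?unitfE ?gt_eqF ?exprn_gt0 //.
by rewrite expr_le1 // ltW.
Qed.

Lemma is_isometry_inverse {g h : vec -> vec} :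
  is_isometry g -> cancel g h -> cancel h g -> is_isometry h.
Proof. by move=> g_iso _ hK u v; rewrite -g_iso !hK. Qed.

Lemma voronoi_nbhd {A : vec -> Prop} {c y : vec} {r : R} :
  A c -> voronoi c A y -> nbhd r A y -> edist y c < r.
Proof.
move=> Ac vor [b Ab yb]; have [<- //|/eqP bc] := eqVneq b c.
by apply: le_lt_trans (vor b Ab bc) yb.
Qed.

End EuclideanGeometry.

Section InversionOrbits.
Context {R : realType} {n : nat}.
Context {B : 'rV[R]_n -> 'rV[R]_n} {ginv : nat -> 'rV[R]_n -> 'rV[R]_n}.
Hypothesis B_iso : is_isometry B.
Hypothesis ginv_iso : forall i, (0 < i)%N -> is_isometry (ginv i).

Lemma edist_Tit_nondecreasing {x a : 'rV[R]_n} :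
  orbit_in_ball B ginv x -> (forall i, on_sphere (Tit B ginv i a)) ->
  forall i, edist x a <= edist (Tit B ginv i x) (Tit B ginv i a).
Proof.
move=> x_ball a_sphere; elim=> [|i IH] //=.
rewrite ginv_iso // /inversion B_iso (iota0_sphere (a_sphere i)).
apply: (le_trans IH); apply: edist_iota0_ge => //.
by have /andP[-> /ltW ->] := x_ball i.
Qed.

End InversionOrbits.

Theorem lemma3p4 (R : realType) (n : nat)
  (Z : ('rV[R]_n -> 'rV[R]_n) -> Prop) (B : 'rV[R]_n -> 'rV[R]_n)
  (gam ginv : nat -> 'rV[R]_n -> 'rV[R]_n)
  (A : 'rV[R]_n -> Prop) (eps : R) (a x : 'rV[R]_n) :
  isometry_group Z -> discrete_group Z ->
  is_isometry B -> B 0 = 0 ->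
  (forall i, (0 < i)%N -> Z (gam i)) ->
  (forall i, (0 < i)%N -> cancel (gam i) (ginv i) /\ cancel (ginv i) (gam i)) ->
  (forall y, A y -> on_sphere y) ->
  0 < eps -> A a ->
  eps_trapped_by B ginv A eps a x ->
  ~ converges_to B ginv A x.
Proof.
move=> [Z_iso _ _ _] _ B_iso _ Z_gam gamK A_sphere _ Aa.
move=> [[_ [A_Ta trap]] [x_orbit x_vor]] [_ conv].
have ginv_iso i : (0 < i)%N -> is_isometry (ginv i).
  move=> i_gt0; have [gK Kg] := gamK i i_gt0.
  exact: is_isometry_inverse (Z_iso _ (Z_gam i i_gt0)) gK Kg.
have A_Tit i : A (Tit B ginv i a) by case: i => [|i] //; exact: A_Ta.
have dist_grows :=
  edist_Tit_nondecreasing B_iso ginv_iso x_orbit.1 (fun i => A_sphere _ (A_Tit i)).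
have xa_gt0 : 0 < edist x a.
  apply: edist_gt0 => xa; have := x_orbit.1 0%N.
  by rewrite /= xa A_sphere // ltxx andbF.
have [_ [N near_A]] := conv _ xa_gt0.
have [_ vor_N] := trap x x_orbit x_vor N.
have := voronoi_nbhd (A_Tit N) vor_N (near_A N (leqnn N)).
by rewrite ltNge dist_grows.
Qed.
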